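(* Let $I_0\subseteq[n]$ and $\bar J_0\subseteq[\bar d]$ be nonempty. (b) If $\mathcal M=\{M_{I,\bar J}\}$ is an $(n,d)$-matching ensemble, then deleting from every $M_{I,\bar J}$ all vertices outside $I_0\sqcup\bar J_0$ (and removing duplicates) yields exactly the collection $\{M_{I,\bar J}: I\subseteq I_0,\ \bar J\subseteq\bar J_0,\ |I|=|\bar J|\}$, which contains exactly one bijection for each such pair and is a matching ensemble on $I_0\sqcup\bar J_0$. (c) If $\mathcal T$ is an extended $(n,d)$-tope arrangement, then its $(I_0,\bar J_0)$-minor is an extended $(|I_0|,|\bar J_0|)$-tope arrangement on $I_0\sqcup\bar J_0$ (i.e. it consists of pairwise compatible topes $I_0\to\bar J_0$, exactly one of each position $v\in\mathbb Z_{\ge0}^{\bar J_0}$ with coordinate sum $|I_0|$). (d) If $\mathcal T$ is an $(n,d)$-pre-trianguloid, then its $(I_0,\bar J_0)$-minor is a pre-trianguloid on $I_0\sqcup\bar J_0$.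
   Context: Fix positive integers $n,d$; graphs are subgraphs of the complete bipartite graph with left vertices $[n]$ and right vertices $[\bar d]=\{\bar1,\dots,\bar d\}$, identified with edge sets. $LD,RD$ denote the vectors of left/right vertex degrees; $e_{\bar j}$ is a unit vector; lattice points of $k\Delta^{d-1}$ are vectors in $\mathbb Z_{\ge0}^{[\bar d]}$ with sum $k$. Two acyclic graphs are compatible if whenever both contain a perfect matching between the same $I\subseteq[n]$, $\bar J\subseteq[\bar d]$, these matchings coincide. A tope is a map $T:[n]\to[\bar d]$ (graph $\{(i,T(i))\}$), with position $RD(T)$. An extended $(n,d)$-tope arrangement is a collection of pairwise compatible topes $T_v$, one for each lattice point $v$ of $n\Delta^{d-1}$, with $RD(T_v)=v$. An $(n,d)$-pre-trianguloid is a collection of topes $T_v$, one for each lattice point $v$ of $n\Delta^{d-1}$, with $RD(T_v)=v$ and such that whenever $v-e_{\bar j}=v'-e_{\bar j'}$ (for lattice points $v,v'$ of $n\Delta^{d-1}$), $T_{v'}^{-1}(\bar j)\subseteq T_v^{-1}(\bar j)$. Both notions transfer verbatim to any finite left set and right set in place of $[n],[\bar d]$. The $(I_0,\bar J_0)$-minor of a collection of topes: from each tope remove all vertices outside $I_0\sqcup\bar J_0$, discard the resulting graphs in which some vertex of $I_0$ has degree $0$ (i.e. keep only topes $T$ with $T(I_0)\subseteq\bar J_0$, restricted to $I_0$), and remove duplicates. An $(n,d)$-matching ensemble is a collection of bijections $M_{I,\bar J}:I\to\bar J$ (viewed as matching graphs), one for each $I\subseteq[n],\bar J\subseteq[\bar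 d]$ with $|I|=|\bar J|$, such that (Closure) if $I'\subseteq I$, $\bar J'\subseteq\bar J$ and $M_{I,\bar J}$ contains a perfect matching between $I'$ and $\bar J'$ then $M_{I',\bar J'}\subseteq M_{I,\bar J}$; (Left linkage) if $|I|=|\bar J|+1$, the union of $M_{I',\bar J}$ over $I'\subset I$, $|I'|=|\bar J|$, is a spanning tree on $I\sqcup\bar J$ with every vertex of $\bar J$ of degree 2; (Right linkage) if $|I|+1=|\bar J|$, the union of $M_{I,\bar J'}$ over $\bar J'\subset\bar J$, $|\bar J'|=|I|$, is a spanning tree on $I\sqcup\bar J$ with every vertex of $I$ of degree 2. *)

From mathcomp Require Import all_boot.
Set Implicit Arguments. Unset Strict Implicit. Unset Printing Implicit Defensive.

Section BipartiteGraphs.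
Variables (TL TR : finType).

Definition nbrL (E : {set TL * TR}) (i : TL) : {set TR} := [set j | (i, j) \in E].
Definition nbrR (E : {set TL * TR}) (j : TR) : {set TL} := [set i | (i, j) \in E].

Definition is_pm (I : {set TL}) (J : {set TR}) (G : {set TL * TR}) : Prop :=
  [/\ G \subset setX I J,
      (forall i, i \in I -> #|nbrL G i| = 1) &
      (forall j, j \in J -> #|nbrR G j| = 1)].

Definition contains_pm (G : {set TL * TR}) (I : {set TL}) (J : {set TR}) : Prop :=
  exists M : {set TL * TR}, M \subset G /\ is_pm I J M.

Definition badj (E : {set TL * TR}) : rel (TL + TR) :=
  fun u v => match u, v with
             | inl i, inr j => (i, j) \in E
             | inr j, inl i => (i, j) \in E
             | _, _ => false
             end.

Definition vset (I : {set TL}) (J : {set TR}) : {set TL + TR} :=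
  [set x | match x with inl i => i \in I | inr j => j \in J end].

Definition acyclic (E : {set TL * TR}) : Prop :=
  forall p : seq (TL + TR), uniq p -> 3 <= size p -> ~~ cycle (badj E) p.

Definition spanning_tree (I : {set TL}) (J : {set TR}) (E : {set TL * TR}) : Prop :=
  [/\ E \subset setX I J,
      (forall u v, u \in vset I J -> v \in vset I J -> connect (badj E) u v) &
      acyclic E].

Definition compatible (G H : {set TL * TR}) : Prop :=
  forall (I : {set TL}) (J : {set TR}) (M1 M2 : {set TL * TR}),
    M1 \subset G -> M2 \subset H -> is_pm I J M1 -> is_pm I J M2 -> M1 = M2.

Definition matching_ensemble (L0 : {set TL}) (R0 : {set TR})
    (M : {set TL} -> {set TR} -> {set TL * TR}) : Prop :=
  [/\ (forall (I : {set TL}) (J : {set TR}), I \subset L0 -> J \subset R0 -> #|I| = #|J| -> is_pm I J (M I J)),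
      (forall (I I' : {set TL}) (J J' : {set TR}), I \subset L0 -> J \subset R0 -> #|I| = #|J| ->
          I' \subset I -> J' \subset J -> contains_pm (M I J) I' J' ->
          M I' J' \subset M I J),
      (forall (I : {set TL}) (J : {set TR}), I \subset L0 -> J \subset R0 -> #|I| = #|J| + 1 ->
          let U := \bigcup_(I' in powerset I | #|I'| == #|J|) M I' J in
          spanning_tree I J U /\ (forall j, j \in J -> #|nbrR U j| = 2)) &
      (forall (I : {set TL}) (J : {set TR}), I \subset L0 -> J \subset R0 -> #|I| + 1 = #|J| ->
          let U := \bigcup_(J' in powerset J | #|J'| == #|I|) M I J' in
          spanning_tree I J U /\ (forall i, i \in I -> #|nbrL U i| = 2))].

(* topes L0 -> R0, as graphs {(i, T i)} *)
Definition is_tope (L0 : {set TL}) (R0 : {set TR}) (T : {set TL * TR}) : Prop :=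
  T \subset setX L0 R0 /\ (forall i, i \in L0 -> #|nbrL T i| = 1).

Definition RD (T : {set TL * TR}) : {ffun TR -> nat} := [ffun j => #|nbrR T j|].

Definition lattice_point (R0 : {set TR}) (k : nat) (v : {ffun TR -> nat}) : Prop :=
  (forall j, j \notin R0 -> v j = 0) /\ \sum_(j in R0) v j = k.

Definition one_tope_per_position (L0 : {set TL}) (R0 : {set TR})
    (S : {set {set TL * TR}}) : Prop :=
  (forall T, T \in S -> is_tope L0 R0 T) /\
  (forall v, lattice_point R0 #|L0| v -> exists! T, T \in S /\ RD T = v).

Definition ext_tope_arrangement (L0 : {set TL}) (R0 : {set TR})
    (S : {set {set TL * TR}}) : Prop :=
  one_tope_per_position L0 R0 S /\
  (forall T T', T \in S -> T' \in S -> compatible T T').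

Definition pre_trianguloid (L0 : {set TL}) (R0 : {set TR})
    (S : {set {set TL * TR}}) : Prop :=
  one_tope_per_position L0 R0 S /\
  (* whenever RD T - e_j = RD T' - e_j', i.e. RD T + e_j' = RD T' + e_j *)
  (forall T T' j j', T \in S -> T' \in S -> j \in R0 -> j' \in R0 ->
     (forall k, RD T k + (k == j') = RD T' k + (k == j)) ->
     nbrR T' j \subset nbrR T j).

Definition restrict (I0 : {set TL}) (J0 : {set TR}) (G : {set TL * TR}) : {set TL * TR} :=
  [set e in G | (e.1 \in I0) && (e.2 \in J0)].

Definition minor (I0 : {set TL}) (J0 : {set TR}) (S : {set {set TL * TR}})
    : {set {set TL * TR}} :=
  [set restrict I0 J0 T | T in S &
     [forall i in I0, #|nbrL (restrict I0 J0 T) i| != 0]].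

End BipartiteGraphs.

From mathcomp Require Import all_boot.
Set Implicit Arguments. Unset Strict Implicit. Unset Printing Implicit Defensive.

(* Deleting right vertices only keeps the topes that land in [J0], so the
   work is in deleting one left vertex [i0] from a pre-trianguloid on
   [L0 x R].  Fix a position [v] of the smaller simplex and let [T_s] be the
   tope at [v + e_s].  The exchange property gives [T_t^-1(s) \subset B_s :=
   T_s^-1(s)], with [|B_s| = v_s + 1], so every [T_c] misses exactly one vertex
   of each [B_s], [s != c]; hence the fibres [B_s] form a forest.  Two topes at
   [v + e_a] and [v + e_b] sending [i0] to [a] resp. [b] have the same fibre
   sizes off [i0], so their disagreement set [D] has a common image [C]; the
   [2 |D|] edges they contribute inside [D + C] exceed the forest bound
   [|D| + |C| - 1] unless [D] is empty.  Thus the minor has one tope per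
   position, and the exchange property descends through a common value at
   [i0].  An extended tope arrangement is a pre-trianguloid: a failure of the
   exchange property produces a cycle of disagreements on which two topes
   restrict to different perfect matchings between the same vertex sets.
   Part (b) is Closure: the trace of [M_{I,J}] on [I0 + J0] is a perfect
   matching inside [M_{I,J}], hence equals [M_{I',J'}]. *)

Section Topes.
Variables (TL TR : finType).
Implicit Types (T : {set TL * TR}) (S : {set {set TL * TR}}) (v w : {ffun TR -> nat}).

Lemma card_imset_graph (Y : {set TL}) (f : TL -> TR) : #|[set (z, f z) | z in Y]| = #|Y|.
Proof. by apply: card_imset => x y []. Qed.

Lemma tope_mem (L0 : {set TL}) (R0 : {set TR}) T i j :
  is_tope L0 R0 T -> (i, j) \in T -> (i \in L0) && (j \in R0).
Proof. by case=> /subsetP sT _ /sT; rewrite inE. Qed.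

Lemma tope_total (L0 : {set TL}) (R0 : {set TR}) T i :
  is_tope L0 R0 T -> i \in L0 -> exists j, (i, j) \in T.
Proof.
case=> _ T1 /T1 /eqP /cards1P [j Tij]; exists j.
have : j \in nbrL T i by rewrite Tij set11.
by rewrite inE.
Qed.

Lemma tope_functional (L0 : {set TL}) (R0 : {set TR}) T i j j' :
  is_tope L0 R0 T -> (i, j) \in T -> (i, j') \in T -> j = j'.
Proof.
move=> tT Tij Tij'; have /andP[iL _] := tope_mem tT Tij.
case: tT => _ /(_ i iL) /eqP /cards1P [k Tk].
have : j \in nbrL T i by rewrite inE.
have : j' \in nbrL T i by rewrite inE.
by rewrite Tk !inE => /eqP -> /eqP ->.
Qed.

Lemma mem_restrict (I0 : {set TL}) (J0 : {set TR}) T i j :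
  ((i, j) \in restrict I0 J0 T) = [&& (i, j) \in T, i \in I0 & j \in J0].
Proof. by rewrite inE. Qed.

Lemma restrict_sub (I0 : {set TL}) (J0 : {set TR}) T : restrict I0 J0 T \subset T.
Proof. by apply/subsetP => e; rewrite inE => /andP[]. Qed.

Lemma restrict_id (I0 : {set TL}) (J0 : {set TR}) T :
  T \subset setX I0 J0 -> restrict I0 J0 T = T.
Proof.
move=> /subsetP sT; apply/setP => e; rewrite inE.
by case Te: (e \in T) => //=; move: (sT e Te); rewrite inE.
Qed.

Lemma restrict_restrict (I0 L1 : {set TL}) (J0 : {set TR}) T :
  I0 \subset L1 -> restrict I0 J0 (restrict L1 [set: TR] T) = restrict I0 J0 T.
Proof.
move=> /subsetP sI; apply/setP => -[i j]; rewrite !mem_restrict in_setT andbT.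
by case iI: (i \in I0); rewrite ?andbF //= (sI _ iI) andbT.
Qed.

Lemma is_tope_restrict (L0 I0 : {set TL}) T :
  is_tope L0 [set: TR] T -> I0 \subset L0 -> is_tope I0 [set: TR] (restrict I0 [set: TR] T).
Proof.
move=> tT sI; split.
  by apply/subsetP => -[i j]; rewrite mem_restrict !inE => /and3P[_ ->].
move=> i iI; rewrite -(tT.2 i (subsetP sI _ iI)).
by apply: eq_card => j; rewrite !inE iI /= andbT.
Qed.

Section TopeApplication.
Variable j0 : TR.

(* [j0] is a junk value, returned outside the domain of the tope. *)
Definition tapp T i : TR := odflt j0 [pick j | (i, j) \in T].

Lemma tappP (L0 : {set TL}) (R0 : {set TR}) T i :
  is_tope L0 R0 T -> i \in L0 -> (i, tapp T i) \in T.
Proof.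
move=> tT iL; rewrite /tapp; case: pickP => [j //|noj].
by have [j Tij] := tope_total tT iL; move: (noj j); rewrite Tij.
Qed.

Lemma tappE (L0 : {set TL}) (R0 : {set TR}) T i j :
  is_tope L0 R0 T -> (i, j) \in T -> tapp T i = j.
Proof.
move=> tT Tij; have /andP[iL _] := tope_mem tT Tij.
exact: tope_functional tT (tappP tT iL) Tij.
Qed.

End TopeApplication.

Lemma card_nbrR_RD T w j : RD T = w -> #|nbrR T j| = w j.
Proof. by move<-; rewrite ffunE. Qed.

Definition incr v (t : TR) : {ffun TR -> nat} := [ffun k => v k + (k == t)].

Lemma incrE v t k : incr v t k = v k + (k == t).
Proof. by rewrite ffunE. Qed.

Lemma incr_inj t : injective (incr^~ t).
Proof. by move=> v v' e; apply/ffunP => k; move/ffunP/(_ k): e; rewrite !incrE => /addIn. Qed.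

Lemma lattice_point_incr k v t :
  lattice_point [set: TR] k v -> lattice_point [set: TR] k.+1 (incr v t).
Proof.
case=> _ sum_v; split=> [j|]; first by rewrite inE.
under eq_bigr do rewrite incrE.
rewrite big_split /= sum_v (bigD1 t) //= eqxx big1 ?addn0 ?addn1 // => j /andP[_].
by move/negbTE ->.
Qed.

Lemma tope_lattice_point (L0 : {set TL}) T :
  is_tope L0 [set: TR] T -> lattice_point [set: TR] #|L0| (RD T).
Proof.
move=> tT; split=> [j|]; first by rewrite inE.
have card_sum (X : finType) (A : {set X}) : #|A| = \sum_x (x \in A : nat).
  by rewrite -sum1_card big_mkcond.
under eq_bigr do rewrite ffunE card_sum.
rewrite exchange_big card_sum; apply: eq_bigr => i _.
have -> : \sum_(j in [set: TR]) (i \in nbrR T j : nat) = #|nbrL T i|.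
  by rewrite card_sum big_mkcond; apply: eq_bigr => j _; rewrite !inE.
case: (boolP (i \in L0)) => [/tT.2 -> //|iL].
apply/eqP; rewrite cards_eq0; apply/eqP/setP => j; rewrite !inE.
by apply/negP => /(tope_mem tT); rewrite (negbTE iL).
Qed.

Lemma RD_restrictD1 (L0 : {set TL}) i0 b T :
  is_tope L0 [set: TR] T -> (i0, b) \in T ->
  RD T = incr (RD (restrict (L0 :\ i0) [set: TR] T)) b.
Proof.
move=> tT Ti0b; apply/ffunP => k; rewrite incrE !ffunE.
have -> : nbrR (restrict (L0 :\ i0) [set: TR] T) k = nbrR T k :\ i0.
  apply/setP => i; rewrite !inE andbT.
  case Tik: ((i, k) \in T); rewrite ?andbF //=.
  by have /andP[->] := tope_mem tT Tik.
rewrite (cardsD1 i0 (nbrR T k)) addnC; congr (_ + nat_of_bool _).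
rewrite inE; apply/idP/eqP => [Ti0k|->//]; exact: tope_functional tT Ti0k Ti0b.
Qed.

(* Junk [set0] if [S] has no member at position [w]. *)
Definition tope_at S w : {set TL * TR} := odflt set0 [pick T in S | RD T == w].

Lemma tope_atP (L0 : {set TL}) S w :
  one_tope_per_position L0 [set: TR] S -> lattice_point [set: TR] #|L0| w ->
  tope_at S w \in S /\ RD (tope_at S w) = w.
Proof.
case=> _ ex1 /ex1 [T [[TS RT] _]]; rewrite /tope_at.
case: pickP => [T' /andP[-> /eqP] //|/(_ T)].
by rewrite TS RT eqxx.
Qed.

Lemma RD_inj (L0 : {set TL}) S T T' :
  one_tope_per_position L0 [set: TR] S -> T \in S -> T' \in S -> RD T = RD T' -> T = T'.
Proof.
move=> [tS ex1] TS T'S eRD.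
have [T0 [_ uniq0]] := ex1 _ (tope_lattice_point (tS _ TS)).
by rewrite -(uniq0 _ (conj TS erefl)) (uniq0 _ (conj T'S (esym eRD))).
Qed.

End Topes.

Section Minors.
Variables (TL TR : finType).
Implicit Types (S : {set {set TL * TR}}).

Lemma minor_sub (I0 : {set TL}) (J0 : {set TR}) S A :
  A \in minor I0 J0 S -> exists2 T, T \in S & A \subset T.
Proof. by case/imsetP=> T; rewrite inE => /andP[TS _] ->; exists T; rewrite ?restrict_sub. Qed.

Lemma minor_restrict (L0 I0 : {set TL}) S :
  (forall T, T \in S -> is_tope L0 [set: TR] T) -> I0 \subset L0 ->
  minor I0 [set: TR] S = restrict I0 [set: TR] @: S.
Proof.
move=> tS sI; apply/setP => A; apply/imsetP/imsetP => -[T]; last first.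
  move=> TS ->; exists T => //; rewrite inE TS /=; apply/forall_inP => i iI.
  have [j Tij] := tope_total (tS _ TS) (subsetP sI _ iI).
  by rewrite cards_eq0; apply/set0Pn; exists j; rewrite !inE Tij iI.
by rewrite inE => /andP[TS _] ->; exists T.
Qed.

Lemma minor_id (L0 : {set TL}) S :
  (forall T, T \in S -> is_tope L0 [set: TR] T) -> minor L0 [set: TR] S = S.
Proof.
move=> tS; rewrite (minor_restrict tS (subxx L0)) -[RHS]imset_id.
apply: eq_in_imset => T /tS tT; apply: restrict_id.
by apply/subsetP => -[i j] /(tope_mem tT) /andP[iL _]; rewrite !inE iL.
Qed.

Lemma minor_minor (L0 L1 I0 : {set TL}) (J0 : {set TR}) S :
  (forall T, T \in S -> is_tope L0 [set: TR] T) -> I0 \subset L1 -> L1 \subset L0 ->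
  minor I0 J0 (minor L1 [set: TR] S) = minor I0 J0 S.
Proof.
move=> tS sI sL; rewrite (minor_restrict tS sL); apply/setP => A.
apply/imsetP/imsetP => -[T].
  rewrite inE => /andP[/imsetP[T' T'S ->]]; rewrite restrict_restrict // => cover ->.
  by exists T' => //; rewrite inE T'S.
rewrite inE => /andP[TS cover] ->; exists (restrict L1 [set: TR] T).
  by rewrite inE imset_f //= restrict_restrict.
by rewrite restrict_restrict.
Qed.

Lemma minor_right (I0 : {set TL}) (J0 : {set TR}) S :
  (forall T, T \in S -> is_tope I0 [set: TR] T) ->
  minor I0 J0 S = [set T in S | T \subset setX I0 J0].
Proof.
move=> tS; apply/setP => A; rewrite inE; apply/imsetP/andP.
  case=> T; rewrite inE => /andP[TS /forall_inP cover] ->.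
  suff sT : T \subset setX I0 J0 by rewrite restrict_id.
  apply/subsetP => -[i j] Tij; have /andP[iI _] := tope_mem (tS _ TS) Tij.
  move: (cover i iI); rewrite cards_eq0 => /set0Pn[j'].
  rewrite !inE => /and3P[Tij' _ j'J]; rewrite iI.
  by rewrite (tope_functional (tS _ TS) Tij Tij').
case=> AS sA; exists A; last by rewrite restrict_id.
rewrite inE AS /=; apply/forall_inP => i iI.
have [j Aij] := tope_total (tS _ AS) iI.
rewrite cards_eq0; apply/set0Pn; exists j; rewrite !inE Aij iI /=.
by move/subsetP/(_ _ Aij): sA; rewrite inE => /andP[].
Qed.

End Minors.

Section Disagreement.
Variables (TL TR : finType) (j0 : TR).
Implicit Types (A B : {set TL * TR}).
Local Notation tapp := (tapp j0).

Lemma tope_tappE (L1 : {set TL}) (R0 : {set TR}) A i j :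
  is_tope L1 R0 A -> i \in L1 -> ((i, j) \in A) = (tapp A i == j).
Proof.
move=> tA iL; apply/idP/eqP => [/(tappE j0 tA) //|<-]; exact: tappP _ tA iL.
Qed.

Lemma eq_tope (L1 : {set TL}) (R0 : {set TR}) A B :
  is_tope L1 R0 A -> is_tope L1 R0 B -> {in L1, tapp A =1 tapp B} -> A = B.
Proof.
move=> tA tB eAB; apply/setP => -[i j]; case: (boolP (i \in L1)) => iL.
  by rewrite (tope_tappE _ tA iL) (tope_tappE _ tB iL) eAB.
apply/idP/idP => [/(tope_mem tA)|/(tope_mem tB)]; by rewrite (negbTE iL).
Qed.

Definition disagreement (L1 : {set TL}) A B : {set TL} :=
  [set z in L1 | tapp A z != tapp B z].

Lemma disagreementC (L1 : {set TL}) A B : disagreement L1 A B = disagreement L1 B A.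
Proof. by apply/setP => z; rewrite !inE eq_sym. Qed.

(* The fibres of [A] and [B] over [c] agree outside the disagreement set. *)
Lemma disagreement_image (L1 : {set TL}) A B c :
  is_tope L1 [set: TR] A -> is_tope L1 [set: TR] B -> #|nbrR A c| <= #|nbrR B c| ->
  c \in tapp A @: disagreement L1 A B -> c \in tapp B @: disagreement L1 A B.
Proof.
set D := disagreement L1 A B => tA tB le_AB /imsetP[z zD ec].
apply/contraT => notB.
have agree : nbrR A c :\: D = nbrR B c :\: D.
  apply/setP => x; rewrite !inE; case: (boolP (x \in L1)) => xL /=; last first.
    by apply/idP/idP => [/(tope_mem tA)|/(tope_mem tB)]; rewrite (negbTE xL).
  by rewrite negbK (tope_tappE _ tA xL) (tope_tappE _ tB xL); case: eqP => [->|].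
have noB : nbrR B c :&: D = set0.
  apply/setP => x; rewrite in_set0; apply/negP => /setIP[]; rewrite inE => Bxc xD.
  by move: notB; rewrite -(tappE j0 tB Bxc) imset_f.
move: le_AB; rewrite -(cardsID D (nbrR A c)) -(cardsID D (nbrR B c)) agree noB.
rewrite cards0 leq_add2r leqn0 cards_eq0 => /eqP/setP/(_ z).
have zL : z \in L1 by move: zD; rewrite inE => /andP[].
by rewrite inE [z \in D]zD inE in_set0 ec (tappP j0 tA zL).
Qed.

End Disagreement.

Section PreTrianguloidRemoval.
Variables (TL TR : finType) (j0 : TR) (L0 : {set TL}) (S : {set {set TL * TR}}) (i0 : TL).
Hypotheses (preS : pre_trianguloid L0 [set: TR] S) (i0L : i0 \in L0).
Local Notation tapp := (tapp j0).
Local Notation disagreement := (disagreement j0).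
Local Notation L1 := (L0 :\ i0).

Lemma pre_trianguloid_incr v t s T T' :
  T \in S -> T' \in S -> RD T = incr v t -> RD T' = incr v s ->
  nbrR T s \subset nbrR T' s.
Proof.
move=> TS T'S RT RT'; apply: (preS.2 T' T s t T'S TS (in_setT s) (in_setT t)) => k.
by rewrite RT RT' !incrE addnAC.
Qed.

Lemma lattice_point_incrD1 v s :
  lattice_point [set: TR] #|L1| v -> lattice_point [set: TR] #|L0| (incr v s).
Proof. by rewrite (cardsD1 i0 L0) i0L; apply: lattice_point_incr. Qed.

Section Fibres.
Variable v : {ffun TR -> nat}.
Hypothesis lp_v : lattice_point [set: TR] #|L1| v.
Local Notation T_ s := (tope_at S (incr v s)).

Lemma tope_at_incrP s : T_ s \in S /\ RD (T_ s) = incr v s.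
Proof. exact: tope_atP preS.1 (lattice_point_incrD1 s lp_v). Qed.

Lemma fibre_sub T t s : T \in S -> RD T = incr v t -> nbrR T s \subset nbrR (T_ s) s.
Proof.
move=> TS RT; have [TsS RTs] := tope_at_incrP s.
exact: (pre_trianguloid_incr TS TsS RT RTs).
Qed.

Lemma card_fibre_at s : #|nbrR (T_ s) s| = (v s).+1.
Proof. by rewrite (card_nbrR_RD _ (tope_at_incrP s).2) incrE eqxx addn1. Qed.

(* The fibres [nbrR (T_ s) s] are the edges of a forest: each [T_ c0] misses
   exactly one of them per [s != c0]. *)
Lemma card_fibre_edges (Y : {set TL}) (C : {set TR}) c0 : c0 \in C ->
  #|[set e in setX Y C | e.1 \in nbrR (T_ e.2) e.2]| <= #|Y| + #|C :\ c0|.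
Proof.
move=> c0C; have [Tc0S RTc0] := tope_at_incrP c0; have tTc0 := preS.1.1 _ Tc0S.
pose extra s := odflt i0 [pick z in nbrR (T_ s) s :\: nbrR (T_ c0) s].
have extraP s z : s != c0 -> z \in nbrR (T_ s) s :\: nbrR (T_ c0) s -> z = extra s.
  move=> sc0; have sub := fibre_sub s Tc0S RTc0.
  have : #|nbrR (T_ s) s :\: nbrR (T_ c0) s| = 1.
    rewrite cardsD (setIidPr sub) card_fibre_at (card_nbrR_RD _ RTc0) incrE (negbTE sc0).
    by rewrite addn0 subSnn.
  move/eqP/cards1P => [x ex]; rewrite ex inE => /eqP ->.
  by rewrite /extra ex; case: pickP => [x'|/(_ x)]; rewrite inE ?eqxx //= => /eqP.
have cover : [set e in setX Y C | e.1 \in nbrR (T_ e.2) e.2] \subset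
             [set (z, tapp (T_ c0) z) | z in Y] :|: [set (extra s, s) | s in C :\ c0].
  apply/subsetP => -[z s]; rewrite !inE /= => /andP[/andP[zY sC] zs].
  have [/eqP<-|ne] := boolP (tapp (T_ c0) z == s); first by rewrite imset_f.
  have sc0 : s != c0.
    by apply: contraNneq ne => esc0; move: zs; rewrite esc0 => /(tappE j0 tTc0) ->.
  rewrite [X in _ || X](_ : _ = true) ?orbT //; apply/imsetP; exists s; first by rewrite !inE sc0.
  congr (_, _); apply: extraP; rewrite // !inE zs andbT.
  by apply: contra ne => /(tappE j0 tTc0) ->.
apply: leq_trans (subset_leq_card cover) _; apply: leq_trans (leq_card_setU _ _) _.
by apply: leq_add; apply: leq_imset_card.
Qed.

(* The disagreement set [D] and its image [C] would carry [2 #|D|] edges of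
   the forest of fibres, but there are at most [#|D| + #|C| - 1]. *)
Lemma restrictD1_eq Ta Tb a b :
  Ta \in S -> Tb \in S -> RD Ta = incr v a -> RD Tb = incr v b ->
  (i0, a) \in Ta -> (i0, b) \in Tb ->
  restrict L1 [set: TR] Ta = restrict L1 [set: TR] Tb.
Proof.
move=> TaS TbS RTa RTb Ta_i0 Tb_i0.
have restrictP T t : T \in S -> RD T = incr v t ->
  [/\ is_tope L1 [set: TR] (restrict L1 [set: TR] T),
      (i0, t) \in T -> RD (restrict L1 [set: TR] T) = v &
      forall z, z \in L1 -> z \in nbrR (T_ (tapp (restrict L1 [set: TR] T) z))
                                        (tapp (restrict L1 [set: TR] T) z)].
  move=> TS RT; have tT := preS.1.1 _ TS; have tR := is_tope_restrict tT (subD1set L0 i0).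
  split=> // [Ti0|z zL]; first by apply: (@incr_inj _ t); rewrite -RT (RD_restrictD1 tT Ti0).
  apply: (subsetP (fibre_sub _ TS RT)); rewrite inE.
  exact: subsetP (restrict_sub _ _ _) _ (tappP _ tR zL).
have [tA /(_ Ta_i0) RA A_fibre] := restrictP _ _ TaS RTa.
have [tB /(_ Tb_i0) RB B_fibre] := restrictP _ _ TbS RTb.
set A := restrict L1 [set: TR] Ta in tA RA A_fibre *.
set B := restrict L1 [set: TR] Tb in tB RB B_fibre *.
set D := disagreement L1 A B.
have [D0|[y yD]] := set_0Vmem D.
  apply: (eq_tope (j0 := j0) tA tB) => z zL.
  by move/setP/(_ z): D0; rewrite in_set0 in_set zL => /negbFE/eqP.
set C := tapp A @: D.
have BC z : z \in D -> tapp B z \in C.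
  move=> zD; rewrite /C /D disagreementC; apply: disagreement_image tB tA _ _.
    by rewrite (card_nbrR_RD _ RA) (card_nbrR_RD _ RB).
  by rewrite -disagreementC imset_f.
have zL z : z \in D -> z \in L1 by rewrite inE => /andP[].
pose E := [set (z, tapp A z) | z in D] :|: [set (z, tapp B z) | z in D].
have cardE : #|E| = #|D| + #|D|.
  rewrite cardsU !card_imset_graph -[RHS]subn0; congr (_ - _); apply/eqP.
  rewrite cards_eq0; apply/eqP/setP => e; rewrite !inE.
  apply/negP => /andP[/imsetP[z zD ->] /imsetP[z' _ [<- eAB]]].
  by move: zD; rewrite inE eAB eqxx andbF.
have sub : E \subset [set e in setX D C | e.1 \in nbrR (T_ e.2) e.2].
  apply/subsetP => e /setUP[] /imsetP[z zD ->]; rewrite inE /= in_setX zD /=.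
    by rewrite imset_f // A_fibre ?zL.
  by rewrite BC // B_fibre ?zL.
have := leq_trans (subset_leq_card sub) (card_fibre_edges D (imset_f (tapp A) yD)).
rewrite cardE leq_add2l => le_DC; have := leq_imset_card (tapp A) D.
by rewrite (cardsD1 (tapp A y)) imset_f // add1n => /leq_trans/(_ le_DC); rewrite ltnn.
Qed.

Lemma tope_at_tapp_i0 T t : T \in S -> RD T = incr v t ->
  (i0, tapp T i0) \in T_ (tapp T i0).
Proof.
move=> TS RT; have := subsetP (fibre_sub (tapp T i0) TS RT) i0; rewrite !inE; apply.
exact: tappP (preS.1.1 _ TS) i0L.
Qed.

End Fibres.

Lemma minorD1E : minor L1 [set: TR] S = restrict L1 [set: TR] @: S.
Proof. exact: minor_restrict preS.1.1 (subD1set L0 i0). Qed.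

Lemma one_tope_per_position_minorD1 :
  one_tope_per_position L1 [set: TR] (minor L1 [set: TR] S).
Proof.
rewrite minorD1E; split=> [A /imsetP[T TS ->]|v lp_v].
  exact: is_tope_restrict (preS.1.1 _ TS) (subD1set L0 i0).
have [TS RT] := tope_at_incrP lp_v j0.
set b := tapp (tope_at S (incr v j0)) i0.
have Tb_i0 := tope_at_tapp_i0 lp_v TS RT.
have [TbS RTb] := tope_at_incrP lp_v b.
exists (restrict L1 [set: TR] (tope_at S (incr v b))); split.
  split; first exact: imset_f.
  by apply: (@incr_inj _ b); rewrite -[RHS]RTb (RD_restrictD1 (preS.1.1 _ TbS) Tb_i0).
move=> A [/imsetP[T' T'S ->] RA].
have T'_i0 := tappP j0 (preS.1.1 _ T'S) i0L.
have RT' : RD T' = incr v (tapp T' i0) by rewrite (RD_restrictD1 (preS.1.1 _ T'S) T'_i0) RA.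
exact: (restrictD1_eq lp_v TbS T'S RTb RT' Tb_i0 T'_i0).
Qed.

(* Both members of the minor lift to members of [S] with the same value [r]
   at [i0]; [r] is read off the member of [S] at their common upper position. *)
Lemma pre_trianguloid_minorD1 : pre_trianguloid L1 [set: TR] (minor L1 [set: TR] S).
Proof.
have otp1 := one_tope_per_position_minorD1.
split=> // A A' j j' AS A'S _ _ eRD.
have lp_u := tope_lattice_point (otp1.1 _ AS).
have lp_u' := tope_lattice_point (otp1.1 _ A'S).
have e_incr : incr (RD A) j' = incr (RD A') j by apply/ffunP => k; rewrite !incrE eRD.
have [WS RW] := tope_at_incrP lp_u j'.
set r := tapp (tope_at S (incr (RD A) j')) i0.
have P_i0 := tope_at_tapp_i0 lp_u WS RW.
have Q_i0 := tope_at_tapp_i0 lp_u' WS (etrans RW e_incr).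
have [PS RP] := tope_at_incrP lp_u r; have [QS RQ] := tope_at_incrP lp_u' r.
have lift B T : B \in minor L1 [set: TR] S -> T \in S -> RD T = incr (RD B) r ->
    (i0, r) \in T -> B = restrict L1 [set: TR] T.
  move=> BS TS RT Ti0; apply: (RD_inj otp1 BS); first by rewrite minorD1E imset_f.
  by apply: (@incr_inj _ r); rewrite -RT (RD_restrictD1 (preS.1.1 _ TS) Ti0).
rewrite (lift _ _ AS PS RP P_i0) (lift _ _ A'S QS RQ Q_i0).
have sub : nbrR (tope_at S (incr (RD A') r)) j \subset nbrR (tope_at S (incr (RD A) r)) j.
  apply: (preS.2 _ _ j j' PS QS (in_setT j) (in_setT j')) => k.
  by rewrite RP RQ !incrE addnAC eRD addnAC.
apply/subsetP => i; rewrite !inE => /andP[Qij ->].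
by move/subsetP/(_ i): sub; rewrite !inE => ->.
Qed.

End PreTrianguloidRemoval.

Section PreTrianguloidMinor.
Variables (TL TR : finType) (j0 : TR).
Implicit Types (S : {set {set TL * TR}}).

Lemma pre_trianguloid_minorL (L0 I0 : {set TL}) S :
  pre_trianguloid L0 [set: TR] S -> I0 \subset L0 ->
  pre_trianguloid I0 [set: TR] (minor I0 [set: TR] S).
Proof.
move eK : #|L0 :\: I0| => k; elim: k L0 S eK => [|k IH] L0 S eK preS sI.
  have eL : L0 = I0 by apply/eqP; rewrite eqEsubset sI andbT -setD_eq0 -cards_eq0 eK.
  by rewrite -eL (minor_id preS.1.1).
have [i0] : exists i0, i0 \in L0 :\: I0 by apply/set0Pn; rewrite -card_gt0 eK.
rewrite inE => /andP[i0I i0L].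
have sI' : I0 \subset L0 :\ i0.
  apply/subsetP => x xI; rewrite !inE (subsetP sI _ xI) andbT.
  by apply: contraNneq i0I => <-.
have eK' : #|(L0 :\ i0) :\: I0| = k.
  move: eK; rewrite setDDl setUC -setDDl (cardsD1 i0 (L0 :\: I0)) !inE i0I i0L.
  by rewrite add1n => -[].
rewrite -(minor_minor _ preS.1.1 sI' (subD1set L0 i0)).
exact: IH eK' (pre_trianguloid_minorD1 j0 preS i0L) sI'.
Qed.

Lemma one_tope_per_position_minorR (I0 : {set TL}) (J0 : {set TR}) S :
  one_tope_per_position I0 [set: TR] S -> one_tope_per_position I0 J0 (minor I0 J0 S).
Proof.
move=> otpS; rewrite (minor_right J0 otpS.1); split.
  by move=> T; rewrite inE => /andP[/otpS.1 [_ tT] sT].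
move=> v [v0 sum_v].
have lp_v : lattice_point [set: TR] #|I0| v.
  split=> [j|]; first by rewrite inE.
  rewrite -sum_v [RHS]big_mkcond [LHS](eq_bigl xpredT) => [|j]; last by rewrite inE.
  by apply: eq_bigr => j _; case: (boolP (j \in J0)) => // /v0.
have [TS RT] := tope_atP otpS lp_v.
exists (tope_at S v); split.
  split=> //; rewrite inE TS /=; apply/subsetP => -[i j] Tij.
  have /andP[iI _] := tope_mem (otpS.1 _ TS) Tij; rewrite inE iI /=.
  apply/contraT => /v0; rewrite -(card_nbrR_RD j RT) => /eqP; rewrite cards_eq0.
  by move/eqP/setP/(_ i); rewrite !inE Tij.
by move=> A []; rewrite inE => /andP[AS _] RA; apply: (RD_inj otpS) => //; rewrite RA RT.
Qed.

Lemma pre_trianguloid_minor (L0 I0 : {set TL}) (J0 : {set TR}) S :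
  pre_trianguloid L0 [set: TR] S -> I0 \subset L0 -> pre_trianguloid I0 J0 (minor I0 J0 S).
Proof.
move=> preS sI; rewrite -(minor_minor J0 preS.1.1 (subxx I0) sI).
have [otpI axI] := pre_trianguloid_minorL preS sI.
split; first exact: one_tope_per_position_minorR.
rewrite (minor_right J0 otpI.1) => T T' j j'; rewrite !inE => /andP[TS _] /andP[T'S _] _ _.
exact: axI.
Qed.

End PreTrianguloidMinor.

Lemma exists_imset_fixed (X : finType) (P : {set X}) (g : X -> X) :
  P != set0 -> {in P, forall x, g x \in P} ->
  exists C : {set X}, [/\ C \subset P, C != set0 & g @: C = C].
Proof.
move=> P0 gP; pose closed (C : {set X}) := [&& C \subset P, C != set0 & g @: C \subset C].
have closedP : closed P by rewrite /closed subxx P0; apply/subsetP => _ /imsetP[x /gP Px ->].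
have [C /and3P[sCP C0 gC] minC] := arg_minnP (fun C : {set X} => #|C|) closedP.
exists C; split=> //; apply/eqP; rewrite eqEcard gC minC //.
by rewrite /closed imset_eq0 C0 (subset_trans gC sCP) imsetS.
Qed.

Section PerfectMatchings.
Variables (TL TR : finType).
Implicit Types (G M : {set TL * TR}).

Lemma is_pm_graph (C : {set TL}) (h : TL -> TR) :
  {in C &, injective h} -> is_pm C (h @: C) [set (i, h i) | i in C].
Proof.
move=> h_inj; split.
- by apply/subsetP => _ /imsetP[i iC ->]; rewrite inE /= iC imset_f.
- move=> i iC; apply/eqP/cards1P; exists (h i); apply/setP => j; rewrite !inE.
  by apply/imsetP/eqP => [[i' _ [-> ->]] //|->]; exists i.
- move=> _ /imsetP[i iC ->]; apply/eqP/cards1P; exists i; apply/setP => i'; rewrite !inE.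
  apply/imsetP/eqP => [[i'' i''C [-> e]]|->]; last by exists i.
  by apply: h_inj => //; rewrite -e.
Qed.

Lemma compatibleS (G H G' H' : {set TL * TR}) :
  G' \subset G -> H' \subset H -> compatible G H -> compatible G' H'.
Proof.
move=> sG sH cGH I J M1 M2 s1 s2; apply: cGH.
  exact: subset_trans s1 sG.
exact: subset_trans s2 sH.
Qed.

End PerfectMatchings.

Section ExtendedTopeArrangements.
Variables (TL TR : finType) (j0 : TR).
Implicit Types (S : {set {set TL * TR}}).
Local Notation tapp := (tapp j0).

(* Following preimages under [T'] inside the disagreement set gives a cycle
   [C] on which [T] and [T'] restrict to two different perfect matchings
   between [C] and the same right set. *)
Lemma compatible_disagreement_eq0 (L0 : {set TL}) (R0 : {set TR}) T T' :
  is_tope L0 R0 T -> is_tope L0 R0 T' -> compatible T T' ->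
  {in disagreement j0 L0 T T', forall i, tapp T i \in tapp T' @: disagreement j0 L0 T T'} ->
  disagreement j0 L0 T T' = set0.
Proof.
set P := disagreement j0 L0 T T' => tT tT' cTT' imP.
have [//|[y yP]] := set_0Vmem P; exfalso.
have PL i : i \in P -> i \in L0 by rewrite inE => /andP[].
pose h c := [pick i' in P | tapp T' i' == c].
have hP i : i \in P ->
    exists2 i', h (tapp T i) = Some i' & (i' \in P) && (tapp T' i' == tapp T i).
  move=> iP; rewrite /h; case: pickP => [i' Pi'|no_i']; first by exists i'.
  by case/imsetP: (imP _ iP) => i' i'P e; move: (no_i' i'); rewrite i'P e eqxx.
pose g i := odflt i (h (tapp T i)).
have gP i : i \in P -> g i \in P /\ tapp T' (g i) = tapp T i.
  by case/hP=> i' e /andP[i'P /eqP e']; rewrite /g e.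
have g_fun i i' : i \in P -> tapp T i' = tapp T i -> g i' = g i.
  by move=> /hP[i'' e _] e'; rewrite /g e' e.
have [C [sCP C0 gC]] : exists C : {set TL}, [/\ C \subset P, C != set0 & g @: C = C].
  by apply: exists_imset_fixed; [apply/set0Pn; exists y | move=> i /gP[]].
have CL i : i \in C -> i \in L0 by move/(subsetP sCP)/PL.
have g_inj : {in C &, injective g} by apply/imset_injP; rewrite gC.
have f_inj : {in C &, injective (tapp T)}.
  by move=> i1 i2 i1C i2C e; apply: g_inj => //; apply: g_fun (subsetP sCP _ i2C) e.
have fC : tapp T' @: C = tapp T @: C.
  rewrite -[in LHS]gC -imset_comp; apply: eq_in_imset => i iC /=.
  by have [_ ->] := gP _ (subsetP sCP _ iC).
have f'_inj : {in C &, injective (tapp T')} by apply/imset_injP; rewrite fC; apply/imset_injP.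
have sM : [set (i, tapp T i) | i in C] \subset T.
  by apply/subsetP => _ /imsetP[i iC ->]; exact: tappP tT (CL _ iC).
have sM' : [set (i, tapp T' i) | i in C] \subset T'.
  by apply/subsetP => _ /imsetP[i iC ->]; exact: tappP tT' (CL _ iC).
have pm' := is_pm_graph f'_inj; rewrite fC in pm'.
have eM := cTT' _ _ _ _ sM sM' (is_pm_graph f_inj) pm'.
have [z zC] := set0Pn _ C0.
have : (z, tapp T z) \in [set (i, tapp T' i) | i in C] by rewrite -eM imset_f.
case/imsetP=> _ _ [<- eT]; move: (subsetP sCP _ zC).
by rewrite inE eT eqxx andbF.
Qed.

(* If [T'] sends [y] to [j] but [T] does not, then [y] is a disagreement and
   [T] maps the disagreement set into its image under [T']: at [j] because of
   [y], elsewhere by [disagreement_image], since [T] has no more vertices than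
   [T'] over every [c != j]. *)
Lemma ext_tope_arrangement_pre_trianguloid (L0 : {set TL}) S :
  ext_tope_arrangement L0 [set: TR] S -> pre_trianguloid L0 [set: TR] S.
Proof.
move=> [otpS compS]; split=> // T T' j j' TS T'S _ _ eRD.
have tT := otpS.1 _ TS; have tT' := otpS.1 _ T'S.
apply/subsetP => y; rewrite !inE => T'yj; apply/contraT => Tyj.
have yL : y \in L0 by have /andP[] := tope_mem tT' T'yj.
have yP : y \in disagreement j0 L0 T T'.
  by rewrite inE yL (tappE j0 tT' T'yj); apply: contra Tyj => /eqP <-; exact: tappP tT yL.
suff /setP/(_ y) : disagreement j0 L0 T T' = set0 by rewrite yP inE.
apply: (compatible_disagreement_eq0 tT tT' (compS _ _ TS T'S)) => i iP.
have [->|ne] := eqVneq (tapp T i) j; first by rewrite -(tappE j0 tT' T'yj) imset_f.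
apply: disagreement_image tT tT' _ (imset_f _ iP).
by have := eRD (tapp T i); rewrite (negbTE ne) addn0 !ffunE => <-; exact: leq_addr.
Qed.

Lemma ext_tope_arrangement_minor (L0 I0 : {set TL}) (J0 : {set TR}) S :
  ext_tope_arrangement L0 [set: TR] S -> I0 \subset L0 ->
  ext_tope_arrangement I0 J0 (minor I0 J0 S).
Proof.
move=> extS sI; split.
  by case: (pre_trianguloid_minor j0 J0 (ext_tope_arrangement_pre_trianguloid extS) sI).
move=> A A' /minor_sub[T TS sA] /minor_sub[T' T'S sA'].
exact: compatibleS sA sA' (extS.2 _ _ TS T'S).
Qed.

End ExtendedTopeArrangements.

Section MatchingEnsembles.
Variables (TL TR : finType).
Implicit Types (G R : {set TL * TR}) (I : {set TL}) (J : {set TR}).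

Lemma pm_functional I J G i j j' : is_pm I J G -> (i, j) \in G -> (i, j') \in G -> j = j'.
Proof.
case=> /subsetP sG GI _ Gij Gij'; have /andP[iI _] : (i \in I) && (j \in J) by rewrite -in_setX sG.
move/GI/eqP/cards1P: iI => [k Gk].
have : j \in nbrL G i by rewrite inE.
have : j' \in nbrL G i by rewrite inE.
by rewrite Gk !inE => /eqP -> /eqP ->.
Qed.

Lemma pm_injective I J G i i' j : is_pm I J G -> (i, j) \in G -> (i', j) \in G -> i = i'.
Proof.
case=> /subsetP sG _ GJ Gij Gi'j; have /andP[_ jJ] : (i \in I) && (j \in J) by rewrite -in_setX sG.
move/GJ/eqP/cards1P: jJ => [k Gk].
have : i \in nbrR G j by rewrite inE.
have : i' \in nbrR G j by rewrite inE.
by rewrite Gk !inE => /eqP -> /eqP ->.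
Qed.

Lemma pm_fst I J G : is_pm I J G -> fst @: G = I.
Proof.
case=> sG GI _; apply/setP => i; apply/imsetP/idP => [[[i' j] /(subsetP sG)] | iI].
  by rewrite inE => /andP[iI _] ->.
have /eqP/cards1P[j Gj] := GI i iI; exists (i, j) => //.
have : j \in nbrL G i by rewrite Gj set11.
by rewrite inE.
Qed.

Lemma pm_snd I J G : is_pm I J G -> snd @: G = J.
Proof.
case=> sG _ GJ; apply/setP => j; apply/imsetP/idP => [[[i j'] /(subsetP sG)] | jJ].
  by rewrite inE => /andP[_ jJ] ->.
have /eqP/cards1P[i Gi] := GJ j jJ; exists (i, j) => //.
have : i \in nbrR G j by rewrite Gi set11.
by rewrite inE.
Qed.

Lemma pm_card I J G : is_pm I J G -> #|I| = #|J|.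
Proof.
move=> pmG; rewrite -(pm_fst pmG) -(pm_snd pmG).
have /eqP -> : #|fst @: G| == #|G|.
  apply/imset_injP => -[i j] [i' j'] Gij Gij' /= ei; subst i'.
  by rewrite (pm_functional pmG Gij Gij').
have /eqP -> // : #|snd @: G| == #|G|.
apply/imset_injP => -[i j] [i' j'] Gij Gij' /= ej; subst j'.
by rewrite (pm_injective pmG Gij Gij').
Qed.

Lemma is_pm_subset I J G R : is_pm I J G -> R \subset G -> is_pm (fst @: R) (snd @: R) R.
Proof.
move=> pmG /subsetP sRG; split.
- by apply/subsetP => -[i j] Rij; rewrite inE !(imset_f _ Rij).
- move=> _ /imsetP[[i j] Rij ->]; apply/eqP/cards1P; exists j; apply/setP => j'.
  rewrite !inE /=; apply/idP/eqP => [Rij'|->//].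
  exact: pm_functional pmG (sRG _ Rij') (sRG _ Rij).
- move=> _ /imsetP[[i j] Rij ->]; apply/eqP/cards1P; exists i; apply/setP => i'.
  rewrite !inE /=; apply/idP/eqP => [Ri'j|->//].
  exact: pm_injective pmG (sRG _ Ri'j) (sRG _ Rij).
Qed.

Lemma pm_subsetE I J G I' J' (M : {set TL * TR}) :
  is_pm I J G -> M \subset G -> is_pm I' J' M -> M = [set e in G | e.1 \in I'].
Proof.
move=> pmG sMG pmM; apply/setP => -[i j]; rewrite inE /=; apply/idP/andP => [Mij|[Gij iI']].
  by split; [apply: (subsetP sMG) | rewrite -(pm_fst pmM) (imset_f _ Mij)].
move: iI'; rewrite -(pm_fst pmM) => /imsetP[[i' j'] Mij' /= ei]; subst i'.
by rewrite (pm_functional pmG Gij (subsetP sMG _ Mij')).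
Qed.

Definition ensemble_members (I0 : {set TL}) (J0 : {set TR})
    (M : {set TL} -> {set TR} -> {set TL * TR}) : {set {set TL * TR}} :=
  [set M IJ.1 IJ.2 | IJ in [set IJ : {set TL} * {set TR}
     | (IJ.1 \subset I0) && (IJ.2 \subset J0) && (#|IJ.1| == #|IJ.2|)]].

Section Ensemble.
Variables (L0 : {set TL}) (R0 : {set TR}) (M : {set TL} -> {set TR} -> {set TL * TR}).
Hypothesis ensM : matching_ensemble L0 R0 M.

Lemma matching_ensemble_sub (I0 : {set TL}) (J0 : {set TR}) :
  I0 \subset L0 -> J0 \subset R0 -> matching_ensemble I0 J0 M.
Proof.
case: ensM => pmM closM leftM rightM sI sJ.
have s I J : I \subset I0 -> J \subset J0 -> (I \subset L0) * (J \subset R0).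
  by move=> sI0 sJ0; split; [apply: subset_trans sI | apply: subset_trans sJ].
split=> [I J sI0 sJ0|I I' J J' sI0 sJ0|I J sI0 sJ0|I J sI0 sJ0]; have [sIL sJR] := s I J sI0 sJ0.
- exact: pmM.
- exact: closM.
- exact: leftM.
- exact: rightM.
Qed.

Lemma restrict_ensemble I J (I0 : {set TL}) (J0 : {set TR}) :
  I \subset L0 -> J \subset R0 -> #|I| = #|J| ->
  restrict I0 J0 (M I J)
  = M (fst @: restrict I0 J0 (M I J)) (snd @: restrict I0 J0 (M I J)).
Proof.
move=> sIL sJR eIJ; set R := restrict I0 J0 (M I J).
have [pmM closM _ _] := ensM; have pmIJ := pmM _ _ sIL sJR eIJ.
have sRM : R \subset M I J := restrict_sub I0 J0 (M I J).
have pmR := is_pm_subset pmIJ sRM.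
have sI : fst @: R \subset I by rewrite -(pm_fst pmIJ) imsetS.
have sJ : snd @: R \subset J by rewrite -(pm_snd pmIJ) imsetS.
have sR' : M (fst @: R) (snd @: R) \subset M I J.
  by apply: closM sIL sJR eIJ sI sJ _; exists R.
have pmR' := pmM _ _ (subset_trans sI sIL) (subset_trans sJ sJR) (pm_card pmR).
by rewrite [LHS](pm_subsetE pmIJ sRM pmR) [RHS](pm_subsetE pmIJ sR' pmR').
Qed.

End Ensemble.

Lemma restrict_ensemble_members (I0 : {set TL}) (J0 : {set TR})
    (M : {set TL} -> {set TR} -> {set TL * TR}) :
  matching_ensemble [set: TL] [set: TR] M ->
  [set restrict I0 J0 (M IJ.1 IJ.2) | IJ in [set IJ : {set TL} * {set TR} | #|IJ.1| == #|IJ.2|]]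
  = ensemble_members I0 J0 M.
Proof.
move=> ensM; have [pmM _ _ _] := ensM.
apply/setP => G; apply/imsetP/imsetP => -[[I J]]; rewrite inE /=.
  move=> /eqP eIJ ->; set R := restrict I0 J0 (M I J).
  have pmR := is_pm_subset (pmM _ _ (subsetT I) (subsetT J) eIJ) (restrict_sub I0 J0 _).
  exists (fst @: R, snd @: R).
    rewrite inE /= (pm_card pmR) eqxx andbT.
    by apply/andP; split; apply/subsetP => x /imsetP[[i j] + ->]; rewrite inE => /and3P[].
  exact: (restrict_ensemble ensM I0 J0 (subsetT I) (subsetT J) eIJ).
move=> /andP[/andP[sI sJ] /eqP eIJ] ->; exists (I, J); first by rewrite inE /= eIJ.
have [sM _ _] := pmM _ _ (subsetT I) (subsetT J) eIJ.
by rewrite restrict_id // (subset_trans sM) // setXS.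
Qed.

Lemma ensemble_members_uniq (I0 : {set TL}) (J0 : {set TR})
    (M : {set TL} -> {set TR} -> {set TL * TR}) I J :
  matching_ensemble [set: TL] [set: TR] M ->
  I \subset I0 -> J \subset J0 -> #|I| = #|J| ->
  exists! G, G \in ensemble_members I0 J0 M /\ is_pm I J G.
Proof.
move=> [pmM0 _ _ _] sI sJ eIJ; have pmM I' J' := pmM0 I' J' (subsetT I') (subsetT J').
exists (M I J); split.
  by split; [apply/imsetP; exists (I, J); rewrite // inE /= sI sJ eIJ eqxx | exact: pmM].
move=> G [/imsetP[[I' J'] ]]; rewrite inE /= => /andP[_ /eqP eIJ'] -> pmG.
by rewrite -(pm_fst pmG) -(pm_snd pmG) (pm_fst (pmM _ _ eIJ')) (pm_snd (pmM _ _ eIJ')).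
Qed.

End MatchingEnsembles.

Theorem mainTheorem6 (n d : nat) (I0 : {set 'I_n}) (J0 : {set 'I_d}) :
  0 < n -> 0 < d -> I0 != set0 -> J0 != set0 ->
  (* (b) *)
  (forall M : {set 'I_n} -> {set 'I_d} -> {set 'I_n * 'I_d},
     matching_ensemble [set: 'I_n] [set: 'I_d] M ->
     [/\ [set restrict I0 J0 (M IJ.1 IJ.2) | IJ in [set IJ : {set 'I_n} * {set 'I_d}
            | #|IJ.1| == #|IJ.2|]]
         = [set M IJ.1 IJ.2 | IJ in [set IJ : {set 'I_n} * {set 'I_d}
            | (IJ.1 \subset I0) && (IJ.2 \subset J0) && (#|IJ.1| == #|IJ.2|)]],
         (forall (I : {set 'I_n}) (J : {set 'I_d}), I \subset I0 -> J \subset J0 -> #|I| = #|J| ->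
            exists! G, G \in [set M IJ.1 IJ.2 | IJ in [set IJ : {set 'I_n} * {set 'I_d}
               | (IJ.1 \subset I0) && (IJ.2 \subset J0) && (#|IJ.1| == #|IJ.2|)]]
              /\ is_pm I J G) &
         matching_ensemble I0 J0 M]) /\
  (* (c) *)
  (forall S : {set {set 'I_n * 'I_d}},
     ext_tope_arrangement [set: 'I_n] [set: 'I_d] S ->
     ext_tope_arrangement I0 J0 (minor I0 J0 S)) /\
  (* (d) *)
  (forall S : {set {set 'I_n * 'I_d}},
     pre_trianguloid [set: 'I_n] [set: 'I_d] S ->
     pre_trianguloid I0 J0 (minor I0 J0 S)).
Proof.
(* Only [0 < d] is used, to provide the junk value of [tapp]. *)
move=> _ d_gt0 _ _; pose j0 : 'I_d := Ordinal d_gt0.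
split; [move=> M ensM; split | split=> S].
- exact: restrict_ensemble_members.
- by move=> I J; apply: ensemble_members_uniq.
- exact: (matching_ensemble_sub ensM (subsetT I0) (subsetT J0)).
- by move=> extS; apply: (ext_tope_arrangement_minor j0 J0 extS (subsetT I0)).
- by move=> preS; apply: (pre_trianguloid_minor j0 J0 preS (subsetT I0)).
Qed.
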